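(* Let $\mathcal{G}\subseteq C(\mathbb{R},\mathbb{R})$ be nonempty. The following conditions are equivalent: (1) $\mathcal{K}_\mathcal{G}\subseteq\{\mathrm{CL}(\mathbb{R})\cap\mathcal{P}(X):X\subseteq\mathbb{R}\}$; (2) $\mathcal{G}$ is a complete and connected family.
   Context: Functions are identified with their graphs, so $\bigcup\mathcal{G}\subseteq\mathbb{R}^2$ is the union of graphs. $\mathrm{CL}(\mathbb{R})$ is the family of closed subsets of $\mathbb{R}$ and $\mathcal{P}(X)$ the power set of $X$. A family $\mathcal{G}\subseteq C(\mathbb{R},\mathbb{R})$ is complete if $g\in\mathcal{G}$ for every $g\in C(\mathbb{R},\mathbb{R})$ whose graph is contained in $\bigcup\mathcal{G}$; it is connected if for any $f,g\in\mathcal{G}$ and $x\neq y$ there is $h\in\mathcal{G}$ with $h(x)=f(x)$ and $h(y)=g(y)$. For $\mathcal{G}\subseteq C(\mathbb{R},\mathbb{R})$ let $R_\mathcal{G}=\{(f,E)\in C(\mathbb{R},\mathbb{R})\times\mathrm{CL}(\mathbb{R}):(\exists g\in\mathcal{G})\, f\restriction E=g\restriction E\}$; for $\mathcal{F}\subseteq C(\mathbb{R},\mathbb{R})$ put $E_\mathcal{G}(\mathcal{F})=\{E\in\mathrm{CL}(\mathbb{R}):(\forall f\in\mathcal{F})\,(f,E)\in R_\mathcal{G}\}$, and let $\mathcal{K}_\mathcal{G}=\{E_\mathcal{G}(\mathcal{F}):\mathcal{F}\subseteq C(\mathbb{R},\mathbb{R})\}$. *)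

From Stdlib Require Import Reals Rtopology.
Open Scope R_scope.

Definition Cont (f : R -> R) : Prop := continuity f.

Definition CL (E : R -> Prop) : Prop := closed_set E.

Definition graph_union (G : (R -> R) -> Prop) (p : R * R) : Prop :=
  exists g, G g /\ g (fst p) = snd p.

Definition cont_family (G : (R -> R) -> Prop) : Prop := forall g, G g -> Cont g.

Definition complete (G : (R -> R) -> Prop) : Prop :=
  forall g, Cont g -> (forall x, graph_union G (x, g x)) -> G g.

Definition connected_family (G : (R -> R) -> Prop) : Prop :=
  forall f g x y, G f -> G g -> x <> y ->
    exists h, G h /\ h x = f x /\ h y = g y.

Definition RG (G : (R -> R) -> Prop) (f : R -> R) (E : R -> Prop) : Prop :=
  Cont f /\ CL E /\ exists g, G g /\ forall x, E x -> f x = g x.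

Definition EG (G F : (R -> R) -> Prop) (E : R -> Prop) : Prop :=
  CL E /\ forall f, F f -> RG G f E.

Definition KG_sub_closed_powersets (G : (R -> R) -> Prop) : Prop :=
  forall F : (R -> R) -> Prop, (forall f, F f -> Cont f) ->
    exists X : R -> Prop,
      forall E, EG G F E <-> (CL E /\ forall x, E x -> X x).

From Stdlib Require Import Reals Rtopology Lra Classical ClassicalEpsilon
  FunctionalExtensionality PropExtensionality.
Open Scope R_scope.

(* Condition (1) is equivalent to closed interpolation: a continuous [k] that meets some member
   of [G] at each point of a closed set [E] agrees on [E] with a single member of [G] (use
   [F = {k}] one way, and for [X] the set of points where every member of [F] is met the other).
   Interpolating on [E = R] gives completeness, on [E = {x, y}] an affine [k] gives
   connectedness.  Conversely, for complete and connected [G], set [g = k] on [E] and fill each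
   gap [(a, b)] of [E] with a member of [G] through [(a, k a)] and [(b, k b)] of nearly minimal
   oscillation; by completeness [g] is in [G] as soon as it is continuous.  At [e] in [E], small
   gaps near [e] admit a bridge that follows members of [G] through [a], [e] and [b] in turn,
   since completeness and connectedness allow switching from one member to another across any
   interval; so the chosen bridges stay close to [k e]. *)

Lemma continuity_pt_interval f x : continuity_pt f x <->
  forall eps, 0 < eps -> exists d, 0 < d /\
    forall y, x - d < y < x + d -> f x - eps < f y < f x + eps.
Proof.
  split.
  - intros Hf eps Heps. destruct (Hf eps Heps) as [d [Hd Hy]].
    exists d. split; [lra|]. intros y Hyx.
    destruct (Req_dec y x) as [->|Hne]; [lra|].
    assert (Hdist : Rdist (f y) (f x) < eps).
    { apply Hy. split; [split; [exact I|congruence]|]. unfold Rdist. apply Rabs_def1; lra. }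
    unfold Rdist in Hdist. apply Rabs_def2 in Hdist. lra.
  - intros H eps Heps. destruct (H eps Heps) as [d [Hd Hy]].
    exists d. split; [lra|]. intros y [_ Hyx]. unfold Rdist in *.
    apply Rabs_def2 in Hyx. apply Rabs_def1; pose proof (Hy y ltac:(lra)); lra.
Qed.

Lemma continuity_Rmax p q : continuity p -> continuity q ->
  continuity (fun z => Rmax (p z) (q z)).
Proof.
  intros Hp Hq x.
  apply (continuity_pt_locally_ext (fun z => (p z + q z + Rabs (p z - q z)) / 2) _ 1);
    [lra| |reg].
  intros y _. unfold Rmax, Rabs. destruct Rle_dec, Rcase_abs; lra.
Qed.

Lemma continuity_Rmin p q : continuity p -> continuity q ->
  continuity (fun z => Rmin (p z) (q z)).
Proof.
  intros Hp Hq x.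
  apply (continuity_pt_locally_ext (fun z => (p z + q z - Rabs (p z - q z)) / 2) _ 1);
    [lra| |reg].
  intros y _. unfold Rmin, Rabs. destruct Rle_dec, Rcase_abs; lra.
Qed.

Definition glue (p q : R -> R) (s z : R) : R := if Rle_dec z s then p z else q z.

Lemma continuity_glue p q s : continuity p -> continuity q -> p s = q s ->
  continuity (glue p q s).
Proof.
  intros Hp Hq Hs x.
  (* On either side of [s] one of the two clamped arguments is frozen at [s]. *)
  apply (continuity_pt_locally_ext (fun z => p (Rmin z s) + q (Rmax z s) - p s) _ 1); [lra| |].
  - intros y _. unfold glue, Rmin, Rmax. destruct Rle_dec; rewrite ?Hs; ring.
  - assert (Hl : continuity (fun z => p (Rmin z s))).
    { apply (continuity_comp (fun z => Rmin z s) p); [apply continuity_Rmin; reg|exact Hp]. }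
    assert (Hr : continuity (fun z => q (Rmax z s))).
    { apply (continuity_comp (fun z => Rmax z s) q); [apply continuity_Rmax; reg|exact Hq]. }
    apply (continuity_minus (fun z => p (Rmin z s) + q (Rmax z s)) (fun _ => p s)).
    + exact (continuity_plus _ _ Hl Hr).
    + apply continuity_const. intros ? ?. reflexivity.
Qed.

Definition median (a b c : R) : R := Rmax (Rmin a b) (Rmin (Rmax a b) c).

Lemma median_cases a b c : median a b c = a \/ median a b c = b \/ median a b c = c.
Proof. unfold median, Rmax, Rmin; repeat destruct Rle_dec; auto. Qed.

Lemma median_between a b c : a <= median a b c <= b \/ b <= median a b c <= a.
Proof. unfold median, Rmax, Rmin; repeat destruct Rle_dec; lra. Qed.

Lemma median_l a b : median a b a = a.
Proof. unfold median, Rmax, Rmin; repeat destruct Rle_dec; lra. Qed.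

Lemma median_r a b : median a b b = b.
Proof. unfold median, Rmax, Rmin; repeat destruct Rle_dec; lra. Qed.

Section Switch.

Variable G : (R -> R) -> Prop.
Hypothesis G_cont : cont_family G.
Hypothesis G_complete : complete G.
Hypothesis G_connected : connected_family G.

(* The middle piece is [h0] clamped between [p] and [q]: it meets [p] at [s] and [q] at [t],
   and at every point it takes the value of one of [p], [q], [h0], so completeness applies. *)
Lemma exists_switch p q s t : G p -> G q -> s < t ->
  exists h, G h /\ (forall z, z <= s -> h z = p z) /\ (forall z, t <= z -> h z = q z) /\
    (forall z, p z <= h z <= q z \/ q z <= h z <= p z).
Proof.
  intros Gp Gq Hst.
  destruct (G_connected p q s t Gp Gq) as [h0 [Gh0 [Hs Ht]]]; [lra|].
  pose (c z := median (p z) (q z) (h0 z)).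
  assert (Cp := G_cont p Gp). assert (Cq := G_cont q Gq). assert (Ch0 := G_cont h0 Gh0).
  assert (Cc : continuity c).
  { apply (continuity_Rmax (fun z => Rmin (p z) (q z)) (fun z => Rmin (Rmax (p z) (q z)) (h0 z)));
      [apply continuity_Rmin|apply (continuity_Rmin (fun z => Rmax (p z) (q z)))];
      auto using continuity_Rmax. }
  assert (cs : c s = p s) by (unfold c; rewrite Hs; apply median_l).
  assert (ct : c t = q t) by (unfold c; rewrite Ht; apply median_r).
  exists (glue p (glue c q t) s). unfold glue. split; [|split; [|split]].
  - apply G_complete.
    + apply continuity_glue; [exact Cp|apply continuity_glue; auto|].
      unfold glue. destruct Rle_dec; [congruence|lra].
    + intros x. simpl. destruct Rle_dec; [exists p; auto|].
      destruct Rle_dec; [|exists q; auto].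
      unfold c. destruct (median_cases (p x) (q x) (h0 x)) as [-> | [-> | ->]]; eexists; eauto.
  - intros z Hz. destruct Rle_dec; [reflexivity|lra].
  - intros z Hz. destruct Rle_dec; [lra|]. destruct Rle_dec; [|reflexivity].
    replace z with t by lra. exact ct.
  - intros z. destruct Rle_dec; [lra|]. destruct Rle_dec; [apply median_between|lra].
Qed.

End Switch.

Definition between (u v z : R) : Prop := u < z < v \/ v < z < u.

Definition left_end (E : R -> Prop) (x a : R) : Prop :=
  E a /\ a < x /\ forall z, a < z <= x -> ~ E z.

Definition right_end (E : R -> Prop) (x b : R) : Prop :=
  E b /\ x < b /\ forall z, x <= z < b -> ~ E z.

Lemma right_end_opp E x b :
  right_end E x b <-> left_end (fun z => E (- z)) (- x) (- b).
Proof.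
  split.
  - intros [Eb [Hxb Hfree]]. split; [now rewrite Ropp_involutive|split; [lra|]].
    intros z Hz. apply Hfree. lra.
  - intros [Eb [Hxb Hfree]]. rewrite Ropp_involutive in Eb. split; [exact Eb|split; [lra|]].
    intros z Hz. specialize (Hfree (- z)). rewrite Ropp_involutive in Hfree. apply Hfree. lra.
Qed.

Lemma closed_set_opp E : closed_set E -> closed_set (fun z => E (- z)).
Proof.
  intros HE x Hx. destruct (HE (- x) Hx) as [r Hr].
  exists r. intros y Hy. apply Hr. unfold disc in *.
  replace (- y - - x) with (- (y - x)) by ring. now rewrite Rabs_Ropp.
Qed.

Lemma closed_set_free_ball E x : closed_set E -> ~ E x ->
  exists r, 0 < r /\ forall y, x - r < y < x + r -> ~ E y.
Proof.
  intros HE Hx. destruct (HE x Hx) as [r Hr].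
  exists r. split; [apply cond_pos|]. intros y Hy. apply Hr. unfold disc. apply Rabs_def1; lra.
Qed.

Lemma left_end_unique E x a a' : left_end E x a -> left_end E x a' -> a = a'.
Proof.
  intros [Ea [Hax Ha]] [Ea' [Hax' Ha']].
  destruct (Rtotal_order a a') as [Hlt|[Heq|Hgt]]; [|exact Heq|].
  - exfalso. apply (Ha a'); [lra|exact Ea'].
  - exfalso. apply (Ha' a); [lra|exact Ea].
Qed.

Lemma right_end_unique E x b b' : right_end E x b -> right_end E x b' -> b = b'.
Proof.
  rewrite !right_end_opp. intros Hb Hb'.
  apply Ropp_eq_reg. exact (left_end_unique _ _ _ _ Hb Hb').
Qed.

(* The supremum of the points of [E] below [x] lies in [E] because [E] is closed. *)
Lemma left_end_exists E x : closed_set E -> ~ E x -> (exists z, E z /\ z < x) ->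
  exists a, left_end E x a.
Proof.
  intros HE Hx [z0 Hz0].
  pose (S z := E z /\ z < x).
  destruct (completeness S) as [a [Hub Hlub]]; [exists x; intros z [_ Hz]; lra|now exists z0|].
  assert (Ea : E a).
  { apply NNPP. intros Ha. destruct (closed_set_free_ball E a HE Ha) as [r [Hr Hfree]].
    enough (a <= a - r) by lra.
    apply Hlub. intros z Sz. pose proof (Hub z Sz).
    destruct (Rle_dec z (a - r)) as [|Hz]; [assumption|].
    exfalso. apply (Hfree z); [lra|apply Sz]. }
  assert (Hax : a <= x) by (apply Hlub; intros z [_ Hz]; lra).
  exists a. split; [exact Ea|split].
  - destruct (Req_dec a x) as [->|]; [contradiction|lra].
  - intros z Hz Ez. destruct (Req_dec z x) as [->|]; [contradiction|].
    assert (z <= a) by (apply Hub; split; [exact Ez|lra]). lra.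
Qed.

Lemma right_end_exists E x : closed_set E -> ~ E x -> (exists z, E z /\ x < z) ->
  exists b, right_end E x b.
Proof.
  intros HE Hx [z0 [Ez0 Hz0]].
  destruct (left_end_exists (fun z => E (- z)) (- x)) as [a Ha].
  - now apply closed_set_opp.
  - now rewrite Ropp_involutive.
  - exists (- z0). rewrite Ropp_involutive. split; [exact Ez0|lra].
  - exists (- a). apply right_end_opp. now rewrite Ropp_involutive.
Qed.

Lemma gap_ends_between E u v y : closed_set E -> E u -> E v -> u < y < v -> ~ E y ->
  exists a b, left_end E y a /\ right_end E y b /\ u <= a /\ b <= v.
Proof.
  intros HE Eu Ev Hy Ey.
  destruct (left_end_exists E y HE Ey) as [a Ha]; [now exists u; split; [|lra]|].
  destruct (right_end_exists E y HE Ey) as [b Hb]; [now exists v; split; [|lra]|].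
  exists a, b. split; [exact Ha|split; [exact Hb|split]].
  - destruct Ha as [_ [_ Ha]]. destruct (Rle_dec u a) as [|Hua]; [assumption|].
    exfalso. apply (Ha u); [lra|exact Eu].
  - destruct Hb as [_ [_ Hb]]. destruct (Rle_dec b v) as [|Hbv]; [assumption|].
    exfalso. apply (Hb v); [lra|exact Ev].
Qed.

Lemma left_end_transfer E x y a : ~ E y -> (forall z, between x y z -> ~ E z) ->
  left_end E x a -> left_end E y a.
Proof.
  intros Ey Hfree [Ea [Hax Ha]]. split; [exact Ea|split].
  - destruct (Rlt_dec a y) as [|Hay]; [assumption|].
    destruct (Req_dec a y) as [->|]; [contradiction|].
    exfalso. apply (Hfree a); [right; lra|exact Ea].
  - intros z Hz. destruct (Rle_dec z x); [apply Ha; lra|].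
    destruct (Req_dec z y) as [->|]; [exact Ey|]. apply Hfree. left. lra.
Qed.

Lemma left_end_eq E x y : ~ E x -> ~ E y -> (forall z, between x y z -> ~ E z) ->
  left_end E x = left_end E y.
Proof.
  intros Ex Ey Hfree. apply functional_extensionality. intros a.
  apply propositional_extensionality. split; apply left_end_transfer; auto.
  intros z Hz. apply Hfree. unfold between in *. tauto.
Qed.

Lemma right_end_eq E x y : ~ E x -> ~ E y -> (forall z, between x y z -> ~ E z) ->
  right_end E x = right_end E y.
Proof.
  intros Ex Ey Hfree. apply functional_extensionality. intros b.
  apply propositional_extensionality. rewrite !right_end_opp.
  rewrite (left_end_eq (fun z => E (- z)) (- x) (- y)); [reflexivity|now rewrite Ropp_involutive..|].
  intros z Hz. rewrite <- (Ropp_involutive z) in Hz. apply Hfree. unfold between in *. lra.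
Qed.

Definition opt_witness (P : R -> Prop) : option R :=
  epsilon (inhabits None) (fun o => forall a, o = Some a <-> P a).

Lemma opt_witness_spec (P : R -> Prop) : (forall a a', P a -> P a' -> a = a') ->
  forall a, opt_witness P = Some a <-> P a.
Proof.
  intros Huniq. unfold opt_witness. apply epsilon_spec.
  destruct (classic (exists a, P a)) as [[a Ha]|Hnone].
  - exists (Some a). intros a'. split; [intros [= <-]; exact Ha|].
    intros Ha'. f_equal. exact (Huniq a a' Ha Ha').
  - exists None. intros a. split; [discriminate|]. intros Ha. exfalso. eauto.
Qed.

Definition gap_left E x := opt_witness (left_end E x).
Definition gap_right E x := opt_witness (right_end E x).

Lemma gap_left_spec E x a : gap_left E x = Some a <-> left_end E x a.
Proof. apply opt_witness_spec. apply left_end_unique. Qed.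

Lemma gap_right_spec E x b : gap_right E x = Some b <-> right_end E x b.
Proof. apply opt_witness_spec. apply right_end_unique. Qed.

Lemma exists_near_inf (P : R -> Prop) m d : 0 < d -> (forall c, P c -> m <= c) ->
  (exists c, P c) -> exists c, P c /\ forall c', P c' -> c <= c' + d.
Proof.
  intros Hd Hm Hne.
  destruct (completeness (fun x => P (- x))) as [s [Hub Hlub]].
  - exists (- m). intros x Hx. pose proof (Hm _ Hx). lra.
  - destruct Hne as [c Hc]. exists (- c). now rewrite Ropp_involutive.
  - apply NNPP. intros Hnone.
    enough (s <= s - d) by lra.
    apply Hlub. intros x Hx. apply Rnot_lt_le. intros Hlt.
    apply Hnone. exists (- x). split; [exact Hx|].
    intros c' Hc'. assert (- c' <= s) by (apply Hub; now rewrite Ropp_involutive). lra.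
Qed.

Section Extension.

Variable G : (R -> R) -> Prop.
Hypothesis G_cont : cont_family G.
Hypothesis G_complete : complete G.
Hypothesis G_connected : connected_family G.
Variable g0 : R -> R.
Hypothesis G_g0 : G g0.

Variable f : R -> R.
Hypothesis f_cont : continuity f.
Variable E : R -> Prop.
Hypothesis E_closed : closed_set E.
Hypothesis met_on_E : forall x, E x -> exists g, G g /\ g x = f x.

Definition bridge (a b : R) (h : R -> R) (c : R) : Prop :=
  G h /\ h a = f a /\ h b = f b /\ forall z, a <= z <= b -> f a - c <= h z <= f a + c.

Lemma bridge_exists a b : E a -> E b -> a < b -> exists h c, bridge a b h c.
Proof.
  intros Ea Eb Hab.
  destruct (met_on_E a Ea) as [ga [Gga Hga]]. destruct (met_on_E b Eb) as [gb [Ggb Hgb]].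
  destruct (G_connected ga gb a b Gga Ggb) as [h [Gh [Ha Hb]]]; [lra|].
  assert (Hcont : forall z, a <= z <= b -> continuity_pt h z) by (intros; now apply G_cont).
  destruct (continuity_ab_maj h a b) as [M [HM _]]; [lra|exact Hcont|].
  destruct (continuity_ab_min h a b) as [m [Hm _]]; [lra|exact Hcont|].
  exists h, (Rmax (h M - f a) (f a - h m)).
  split; [exact Gh|split; [congruence|split; [congruence|]]].
  intros z Hz. specialize (HM z Hz). specialize (Hm z Hz).
  pose proof (Rmax_l (h M - f a) (f a - h m)). pose proof (Rmax_r (h M - f a) (f a - h m)). lra.
Qed.

(* The infimum of the bounds need not be attained; a slack of [b - a] makes a choice possible
   and becomes negligible for small gaps. *)
Definition optimal_bridge (a b : R) (h : R -> R) : Prop :=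
  exists c, bridge a b h c /\ forall h' c', bridge a b h' c' -> c <= c' + (b - a).

Definition best_bridge (a b : R) : R -> R := epsilon (inhabits g0) (optimal_bridge a b).

Lemma best_bridge_spec a b : E a -> E b -> a < b -> optimal_bridge a b (best_bridge a b).
Proof.
  intros Ea Eb Hab. unfold best_bridge. apply epsilon_spec.
  destruct (exists_near_inf (fun c => exists h, bridge a b h c) 0 (b - a))
    as [c [[h Hh] Hc]].
  - lra.
  - intros c [h [_ [_ [_ Hbd]]]]. specialize (Hbd a). lra.
  - destruct (bridge_exists a b Ea Eb Hab) as [h [c Hh]]. eauto.
  - exists h, c. split; [exact Hh|]. intros h' c' Hh'. apply Hc. eauto.
Qed.

(* Follow [ga] out of [a], then [ge], then [gb] into [b]: each piece stays close to [f e]. *)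
Lemma bridges_near e eps : E e -> 0 < eps -> exists d, 0 < d /\
  forall a b, E a -> E b -> a < b -> e - d < a -> b < e + d -> exists h, bridge a b h (3 * eps).
Proof.
  intros Ee Heps.
  destruct (met_on_E e Ee) as [ge [Gge Hge]].
  destruct (proj1 (continuity_pt_interval ge e) (G_cont ge Gge e) eps Heps) as [d1 [Hd1 Hc1]].
  destruct (proj1 (continuity_pt_interval f e) (f_cont e) eps Heps) as [d2 [Hd2 Hc2]].
  exists (Rmin d1 d2). split; [now apply Rmin_pos|].
  pose proof (Rmin_l d1 d2). pose proof (Rmin_r d1 d2).
  intros a b Ea Eb Hab Hea Hbe.
  destruct (met_on_E a Ea) as [ga [Gga Hga]]. destruct (met_on_E b Eb) as [gb [Ggb Hgb]].
  destruct (proj1 (continuity_pt_interval ga a) (G_cont ga Gga a) eps Heps) as [ra [Hra Hca]].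
  destruct (proj1 (continuity_pt_interval gb b) (G_cont gb Ggb b) eps Heps) as [rb [Hrb Hcb]].
  pose (s := a + Rmin ra (b - a) / 3). pose (t := b - Rmin rb (b - a) / 3).
  pose proof (Rmin_l ra (b - a)). pose proof (Rmin_r ra (b - a)).
  pose proof (Rmin_l rb (b - a)). pose proof (Rmin_r rb (b - a)).
  assert (0 < Rmin ra (b - a)) by (apply Rmin_pos; lra).
  assert (0 < Rmin rb (b - a)) by (apply Rmin_pos; lra).
  destruct (exists_switch G G_cont G_complete G_connected ga ge a s Gga Gge)
    as [p [Gp [Hpa [Hps Hpb]]]]; [unfold s; lra|].
  destruct (exists_switch G G_cont G_complete G_connected p gb t b Gp Ggb)
    as [h [Gh [Hht [Hhb Hhbd]]]]; [unfold t; lra|].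
  exists h. split; [exact Gh|split; [|split]].
  - rewrite Hht, Hpa; [exact Hga| |]; unfold t; lra.
  - rewrite Hhb; [exact Hgb|lra].
  - intros z Hz.
    assert (Hfa := Hc2 a ltac:(lra)). assert (Hfb := Hc2 b ltac:(lra)).
    assert (Hgez := Hc1 z ltac:(lra)). rewrite Hge in Hgez.
    destruct (Rle_dec z t) as [Hzt|Hzt].
    + rewrite Hht by exact Hzt.
      destruct (Rle_dec z s) as [Hzs|Hzs]; [|rewrite Hps by lra; lra].
      assert (Hgaz := Hca z ltac:(unfold s in Hzs; lra)). rewrite Hga in Hgaz.
      specialize (Hpb z). lra.
    + assert (Hgbz := Hcb z ltac:(unfold t in Hzt; lra)). rewrite Hgb in Hgbz.
      specialize (Hhbd z). rewrite Hps in Hhbd by (unfold s, t in *; lra). lra.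
Qed.

Definition through (a : R) : R -> R := epsilon (inhabits g0) (fun h => G h /\ h a = f a).

Lemma through_spec a : E a -> G (through a) /\ through a a = f a.
Proof. intros Ea. unfold through. apply epsilon_spec. exact (met_on_E a Ea). Qed.

Definition fill (oa ob : option R) : R -> R :=
  match oa, ob with
  | Some a, Some b => best_bridge a b
  | Some a, None => through a
  | None, Some b => through b
  | None, None => g0
  end.

Definition gap_fill (x : R) : R -> R := fill (gap_left E x) (gap_right E x).

Definition extension (x : R) : R :=
  if excluded_middle_informative (E x) then f x else gap_fill x x.

Lemma extension_on_E x : E x -> extension x = f x.
Proof. intros Ex. unfold extension. now destruct excluded_middle_informative. Qed.

Lemma extension_off_E x : ~ E x -> extension x = gap_fill x x.
Proof. intros Ex. unfold extension. now destruct excluded_middle_informative. Qed.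

Lemma gap_fill_in_G x : G (gap_fill x).
Proof.
  unfold gap_fill.
  destruct (gap_left E x) as [a|] eqn:Ha, (gap_right E x) as [b|] eqn:Hb; simpl.
  - apply gap_left_spec in Ha as [Ea [Hax _]]. apply gap_right_spec in Hb as [Eb [Hxb _]].
    destruct (best_bridge_spec a b Ea Eb ltac:(lra)) as [c [[Gh _] _]]. exact Gh.
  - apply gap_left_spec in Ha as [Ea _]. now apply through_spec.
  - apply gap_right_spec in Hb as [Eb _]. now apply through_spec.
  - exact G_g0.
Qed.

Lemma gap_fill_left x a : left_end E x a -> gap_fill x a = f a.
Proof.
  intros Ha. unfold gap_fill. rewrite (proj2 (gap_left_spec E x a) Ha).
  destruct (gap_right E x) as [b|] eqn:Hb; simpl; [|now apply through_spec, Ha].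
  apply gap_right_spec in Hb as [Eb [Hxb _]]. destruct Ha as [Ea [Hax _]].
  now destruct (best_bridge_spec a b Ea Eb ltac:(lra)) as [c [[_ [Hh _]] _]].
Qed.

Lemma gap_fill_right x b : right_end E x b -> gap_fill x b = f b.
Proof.
  intros Hb. unfold gap_fill. rewrite (proj2 (gap_right_spec E x b) Hb).
  destruct (gap_left E x) as [a|] eqn:Ha; simpl; [|now apply through_spec, Hb].
  apply gap_left_spec in Ha as [Ea [Hax _]]. destruct Hb as [Eb [Hxb _]].
  now destruct (best_bridge_spec a b Ea Eb ltac:(lra)) as [c [[_ [_ [Hh _]]] _]].
Qed.

Lemma gap_fill_eq x y : ~ E x -> ~ E y -> (forall z, between x y z -> ~ E z) ->
  gap_fill x = gap_fill y.
Proof.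
  intros Ex Ey Hfree. unfold gap_fill, gap_left, gap_right.
  now rewrite (left_end_eq E x y), (right_end_eq E x y).
Qed.

Lemma extension_in_union x : graph_union G (x, extension x).
Proof.
  unfold extension. destruct excluded_middle_informative as [Ex|Ex].
  - exact (met_on_E x Ex).
  - exists (gap_fill x). split; [apply gap_fill_in_G|reflexivity].
Qed.

Lemma extension_continuous_off_E x : ~ E x -> continuity_pt extension x.
Proof.
  intros Ex. destruct (closed_set_free_ball E x E_closed Ex) as [r [Hr Hfree]].
  apply (continuity_pt_locally_ext (gap_fill x) _ r x Hr); [|exact (G_cont _ (gap_fill_in_G x) x)].
  intros y Hy. unfold Rdist in Hy. apply Rabs_def2 in Hy.
  rewrite extension_off_E by (apply Hfree; lra).
  rewrite (gap_fill_eq x y); [reflexivity|exact Ex|apply Hfree; lra|].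
  intros z Hz. apply Hfree. unfold between in Hz. lra.
Qed.

Lemma extension_small_gaps e eps : E e -> 0 < eps -> exists d, 0 < d /\
  forall y a b, ~ E y -> left_end E y a -> right_end E y b -> e - d < a -> b < e + d ->
    f e - eps < extension y < f e + eps.
Proof.
  intros Ee Heps. pose (ep := eps / 7). assert (Hep : 0 < ep) by (unfold ep; lra).
  destruct (bridges_near e ep Ee Hep) as [d0 [Hd0 Hnear]].
  destruct (proj1 (continuity_pt_interval f e) (f_cont e) ep Hep) as [d1 [Hd1 Hf]].
  pose (d := Rmin d0 (Rmin d1 ep)). exists d.
  pose proof (Rmin_l d0 (Rmin d1 ep)). pose proof (Rmin_r d0 (Rmin d1 ep)).
  pose proof (Rmin_l d1 ep). pose proof (Rmin_r d1 ep).
  split; [unfold d; repeat apply Rmin_pos; lra|].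
  intros y a b Ey Ha Hb Hea Hbe.
  pose proof Ha as [Ea [Hay _]]. pose proof Hb as [Eb [Hyb _]].
  rewrite extension_off_E by exact Ey. unfold gap_fill.
  rewrite (proj2 (gap_left_spec E y a) Ha), (proj2 (gap_right_spec E y b) Hb). simpl.
  destruct (best_bridge_spec a b Ea Eb ltac:(lra)) as [c [[_ [_ [_ Hc]]] Hopt]].
  destruct (Hnear a b Ea Eb ltac:(lra) ltac:(unfold d in *; lra) ltac:(unfold d in *; lra))
    as [h Hh].
  specialize (Hopt h _ Hh). specialize (Hc y ltac:(lra)).
  specialize (Hf a ltac:(unfold d in *; lra)).
  unfold d, ep in *. lra.
Qed.

(* Either [E] accumulates at [e] from the side of [w], and then the gaps on that side are small,
   or the gap next to [e] on that side is filled by a single function through [(e, f e)]. *)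
Lemma extension_one_side e w eps d : E e -> 0 < eps -> w <> e -> e - d < w < e + d ->
  (forall y a b, ~ E y -> left_end E y a -> right_end E y b -> e - d < a -> b < e + d ->
    f e - eps < extension y < f e + eps) ->
  exists r, 0 < r /\ forall y, between e w y -> e - r < y < e + r -> ~ E y ->
    f e - eps < extension y < f e + eps.
Proof.
  intros Ee Heps Hwe Hw Hsmall.
  destruct (classic (exists c, E c /\ between e w c)) as [[c [Ec Hc]]|Hfree].
  - exists (Rabs (c - e)). split; [apply Rabs_pos_lt; unfold between in Hc; lra|].
    intros y Hy Hye Ey. unfold between in *. revert Hye. unfold Rabs. destruct Rcase_abs; intros Hye.
    + destruct (gap_ends_between E c e y E_closed Ec Ee ltac:(lra) Ey) as [a [b [Ha [Hb [Hca Hbe]]]]].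
      apply (Hsmall y a b); auto; lra.
    + destruct (gap_ends_between E e c y E_closed Ee Ec ltac:(lra) Ey) as [a [b [Ha [Hb [Hea Hbc]]]]].
      apply (Hsmall y a b); auto; lra.
  - pose (m := (e + w) / 2).
    assert (Hfree' : forall z, between e w z -> ~ E z) by (intros z Hz Ez; eauto).
    assert (Em : ~ E m) by (apply Hfree'; unfold m, between; lra).
    assert (Hme : gap_fill m e = f e).
    { unfold between in Hfree'. destruct (Rlt_dec e w).
      - apply gap_fill_left. split; [exact Ee|split; [unfold m; lra|]].
        intros z Hz. destruct (Req_dec z m) as [->|]; [exact Em|]. apply Hfree'. unfold m in *; lra.
      - apply gap_fill_right. split; [exact Ee|split; [unfold m; lra|]].
        intros z Hz. destruct (Req_dec z m) as [->|]; [exact Em|]. apply Hfree'. unfold m in *; lra. }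
    destruct (proj1 (continuity_pt_interval (gap_fill m) e) (G_cont _ (gap_fill_in_G m) e) eps)
      as [r [Hr Hcont]]; [exact Heps|].
    exists r. split; [exact Hr|]. intros y Hy Hye Ey.
    rewrite extension_off_E by exact Ey.
    rewrite (gap_fill_eq y m Ey Em), <- Hme; [now apply Hcont|].
    intros z Hz. apply Hfree'. unfold between, m in *. lra.
Qed.

Lemma extension_continuous_on_E e : E e -> continuity_pt extension e.
Proof.
  intros Ee. apply continuity_pt_interval. intros eps Heps. rewrite extension_on_E by exact Ee.
  destruct (extension_small_gaps e eps Ee Heps) as [d [Hd Hsmall]].
  destruct (extension_one_side e (e + d / 2) eps d Ee Heps ltac:(lra) ltac:(lra) Hsmall)
    as [r1 [Hr1 Hright]].
  destruct (extension_one_side e (e - d / 2) eps d Ee Heps ltac:(lra) ltac:(lra) Hsmall)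
    as [r2 [Hr2 Hleft]].
  destruct (proj1 (continuity_pt_interval f e) (f_cont e) eps Heps) as [r3 [Hr3 Hf]].
  pose (r := Rmin (Rmin r1 r2) (Rmin r3 (d / 2))).
  pose proof (Rmin_l (Rmin r1 r2) (Rmin r3 (d / 2))). pose proof (Rmin_r (Rmin r1 r2) (Rmin r3 (d / 2))).
  pose proof (Rmin_l r1 r2). pose proof (Rmin_r r1 r2). pose proof (Rmin_l r3 (d / 2)). pose proof (Rmin_r r3 (d / 2)).
  exists r. split; [unfold r; repeat apply Rmin_pos; lra|]. intros y Hy. unfold r in Hy.
  destruct (classic (E y)) as [Ey|Ey]; [rewrite extension_on_E by exact Ey; apply Hf; lra|].
  destruct (Rtotal_order y e) as [Hlt|[->|Hgt]]; [|contradiction|].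
  - apply Hleft; [unfold between|..]; lra || exact Ey.
  - apply Hright; [unfold between|..]; lra || exact Ey.
Qed.

Theorem extension_exists : exists g, G g /\ forall x, E x -> f x = g x.
Proof.
  exists extension. split.
  - apply G_complete; [|exact extension_in_union]. intros x.
    destruct (classic (E x)); [apply extension_continuous_on_E|apply extension_continuous_off_E]; assumption.
  - intros x Ex. symmetry. now apply extension_on_E.
Qed.

End Extension.

Lemma closed_set_full : closed_set (fun _ => True).
Proof. intros x Hx. exfalso. exact (Hx I). Qed.

Lemma closed_set_pair c d : closed_set (fun z => z = c \/ z = d).
Proof.
  intros x Hx. unfold complementary in Hx.
  assert (Hr : 0 < Rmin (Rabs (x - c)) (Rabs (x - d))) by (apply Rmin_pos; apply Rabs_pos_lt; lra).
  exists (mkposreal _ Hr). intros y Hy [-> | ->]; unfold disc in Hy; simpl in Hy;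
    rewrite Rabs_minus_sym in Hy.
  - pose proof (Rmin_l (Rabs (x - c)) (Rabs (x - d))). lra.
  - pose proof (Rmin_r (Rabs (x - c)) (Rabs (x - d))). lra.
Qed.

Lemma closed_set_singleton c : closed_set (fun z => z = c).
Proof.
  intros x Hx. destruct (closed_set_pair c c x) as [r Hr]; [intros [H|H]; exact (Hx H)|].
  exists r. intros y Hy Hyc. exact (Hr y Hy (or_introl Hyc)).
Qed.

Definition closed_interpolation (G : (R -> R) -> Prop) : Prop :=
  forall k E, Cont k -> CL E -> (forall x, E x -> exists g, G g /\ g x = k x) ->
    exists g, G g /\ forall x, E x -> k x = g x.

Lemma KG_closed_interpolation G : KG_sub_closed_powersets G <-> closed_interpolation G.
Proof.
  split.
  - intros HK k E Hk HE Hpt.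
    destruct (HK (fun h => h = k)) as [X HX]; [now intros h ->|].
    assert (HEX : forall x, E x -> X x).
    { intros x Ex. apply (proj1 (HX (fun z => z = x))); [|reflexivity].
      split; [apply closed_set_singleton|]. intros h ->.
      split; [exact Hk|split; [apply closed_set_singleton|]].
      destruct (Hpt x Ex) as [g [Gg Hg]]. exists g. split; [exact Gg|]. now intros z ->. }
    destruct (proj2 (HX E) (conj HE HEX)) as [_ HkE].
    destruct (HkE k eq_refl) as [_ [_ Hg]]. exact Hg.
  - intros Hint F HF. exists (fun x => forall h, F h -> exists g, G g /\ g x = h x).
    intros E. split.
    + intros [HE HFE]. split; [exact HE|]. intros x Ex h Fh.
      destruct (HFE h Fh) as [_ [_ [g [Gg Hg]]]]. exists g. split; [exact Gg|]. symmetry. auto.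
    + intros [HE HEX]. split; [exact HE|]. intros h Fh.
      split; [exact (HF h Fh)|split; [exact HE|]].
      apply Hint; [exact (HF h Fh)|exact HE|]. intros x Ex. exact (HEX x Ex h Fh).
Qed.

Lemma closed_interpolation_complete G : closed_interpolation G -> complete G.
Proof.
  intros Hint g Hg Hunion.
  destruct (Hint g (fun _ => True) Hg closed_set_full) as [g' [Gg' Hgg']].
  - intros x _. exact (Hunion x).
  - replace g with g'; [exact Gg'|]. apply functional_extensionality. intros x.
    symmetry. now apply Hgg'.
Qed.

Lemma closed_interpolation_connected G : closed_interpolation G -> connected_family G.
Proof.
  intros Hint f g x y Gf Gg Hxy.
  pose (k t := f x + (g y - f x) / (y - x) * (t - x)).
  assert (Hkx : k x = f x) by (unfold k; ring).
  assert (Hky : k y = g y) by (unfold k; field; lra).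
  destruct (Hint k (fun z => z = x \/ z = y)) as [h [Gh Hh]].
  - unfold Cont, k. reg.
  - apply closed_set_pair.
  - intros z [-> | ->]; [now exists f|now exists g].
  - exists h. split; [exact Gh|]. rewrite <- Hkx, <- Hky. split; symmetry; auto.
Qed.

Theorem theorem4p5 (G : (R -> R) -> Prop) :
  cont_family G -> (exists g, G g) ->
  (KG_sub_closed_powersets G <-> (complete G /\ connected_family G)).
Proof.
  intros G_cont [g0 G_g0]. rewrite KG_closed_interpolation. split.
  - intros Hint. split; [apply closed_interpolation_complete|apply closed_interpolation_connected];
      exact Hint.
  - intros [G_complete G_connected] k E Hk HE Hpt.
    exact (extension_exists G G_cont G_complete G_connected g0 G_g0 k Hk E HE Hpt).
Qed.
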